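(* Let $V$ be a finite set of variables and $\mathcal C=\{C_1,\dots,C_m\}$ a set of betweenness constraints over $V$. Let $\phi:V\to\{0,1,2,3\}$ be chosen uniformly at random and let $X=w(\mathcal C,\phi)$. Then $X$ can be expressed as a polynomial of degree $6$ in independent random variables, each uniformly distributed on $\{-1,1\}$.
   Context: A betweenness constraint is $(v_i,\{v_j,v_k\})$ with $v_i,v_j,v_k\in V$ distinct; a bijection $\alpha:V\to\{1,\dots,|V|\}$ satisfies it if $\alpha(v_j)<\alpha(v_i)<\alpha(v_k)$ or $\alpha(v_k)<\alpha(v_i)<\alpha(v_j)$. For $\phi:V\to\{0,1,2,3\}$ let $\ell_i(\phi)=|\phi^{-1}(i)|$. A random $\phi$-compatible bijection $\alpha$ is obtained by assigning, uniformly at random, the values $\sum_{i<j}\ell_i(\phi)+1,\dots,\sum_{i\le j}\ell_i(\phi)$ bijectively to the variables $v$ with $\phi(v)=j$, for each $j=0,1,2,3$. For a constraint $C_p$ let $\nu_p(\alpha)=1$ if $\alpha$ satisfies $C_p$ and $0$ otherwise; define $w(C_p,\phi)=\mathbb E[\nu_p(\alpha)]-1/3$, the expectation over a random $\phi$-compatible bijection $\alpha$ for fixed $\phi$, and $w(\mathcal C,\phi)=\sum_{p=1}^m w(C_p,\phi)$. *)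

From HB Require Import structures.
From mathcomp Require Import all_boot all_order all_algebra.
From mathcomp Require Import mpoly.
Set Implicit Arguments. Unset Strict Implicit. Unset Printing Implicit Defensive.
Import Order.TTheory GRing.Theory Num.Theory.
Local Open Scope ring_scope.

(* A betweenness constraint (v_i, {v_j, v_k}) is encoded as the triple (v_i, v_j, v_k). *)
Definition constraint (V : finType) := (V * V * V)%type.

Definition constraint_distinct (V : finType) (c : constraint V) : bool :=
  let: (vi, vj, vk) := c in [&& vi != vj, vi != vk & vj != vk].

Definition ell (V : finType) (phi : {ffun V -> 'I_4}) (i : 'I_4) : nat :=
  #|[set v | phi v == i]|.

Definition lo (V : finType) (phi : {ffun V -> 'I_4}) (j : 'I_4) : nat :=
  (\sum_(i < 4 | (i < j)%N) ell phi i)%N.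

(* Bijections V -> {1..|V|} are represented 0-based as injective maps V -> 'I_|V|.
   alpha is phi-compatible if every v with phi v = j gets a value in the block
   [sum_{i<j} l_i, sum_{i<=j} l_i) (0-based version of the paper's block). *)
Definition compatible (V : finType) (phi : {ffun V -> 'I_4})
    (alpha : {ffun V -> 'I_#|V|}) : bool :=
  injectiveb alpha &&
  [forall v, (lo phi (phi v) <= alpha v)%N && (alpha v < lo phi (phi v) + ell phi (phi v))%N].

Definition satisfies (V : finType) (c : constraint V) (alpha : {ffun V -> 'I_#|V|}) : bool :=
  let: (vi, vj, vk) := c in
  ((alpha vj < alpha vi)%N && (alpha vi < alpha vk)%N) ||
  ((alpha vk < alpha vi)%N && (alpha vi < alpha vj)%N).

(* w(C_p, phi) = E[nu_p(alpha)] - 1/3, alpha a uniformly random phi-compatible bijection *)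
Definition wC (R : realFieldType) (V : finType) (c : constraint V) (phi : {ffun V -> 'I_4}) : R :=
  (#|[set alpha | compatible phi alpha && satisfies c alpha]|%:R
     / #|[set alpha | compatible phi alpha]|%:R) - 3%:R^-1.

Definition wCs (R : realFieldType) (V : finType) (cs : seq (constraint V)) (phi : {ffun V -> 'I_4}) : R :=
  \sum_(c <- cs) wC R c phi.

Definition pm1 (R : realFieldType) (b : bool) : R := if b then 1 else -1.

From mathcomp Require Import all_boot all_algebra perm zify.
From mathcomp Require Import mpoly.
Import GRing.Theory Num.Theory.
Set Implicit Arguments. Unset Strict Implicit. Unset Printing Implicit Defensive.

(* A phi-compatible bijection lists the blocks phi^-1(0), ..., phi^-1(3) in this order and
   each block in arbitrary order, and transposing two variables of one block permutes the
   compatible bijections.  Hence the probability that a random compatible bijection satisfies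
   (x, {y, z}) depends only on the ties among phi x, phi y, phi z: it is 1/3 if all three
   agree, 1/2 if phi x agrees with exactly one of phi y, phi z, and 0 or 1 otherwise.  So
   w(C, phi) = g (phi x) (phi y) (phi z) for a fixed g.  Writing each phi v by its two binary
   digits, read as signs, makes phi uniform exactly when the 2|V| signs are independent and
   uniform, and the indicator [phi v = p] is a product of two factors (1 +- eps) / 2; so
   g (phi x) (phi y) (phi z) = sum_(p,q,r) g p q r [phi x = p] [phi y = q] [phi z = r]
   has degree 6 in the signs. *)


Section CompatibleBijections.
Variables (V : finType) (phi : {ffun V -> 'I_4}).
Local Notation bij := {ffun V -> 'I_#|V|}.

Lemma card_phi_lt (j : 'I_4) : #|[set u | phi u < j]| = lo phi j.
Proof.
rewrite /lo /ell -sum1_card (partition_big (fun u => phi u) (fun i : 'I_4 => i < j)) /=; last first.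
  by move=> u; rewrite inE.
apply: eq_bigr => i ij; rewrite -sum1_card; apply: eq_bigl => u; rewrite !inE.
by rewrite andb_idl // => /eqP ->.
Qed.

Lemma lo_ell_le (p q : 'I_4) : p < q -> lo phi p + ell phi p <= lo phi q.
Proof.
move=> pq; rewrite -!card_phi_lt /ell -cardsUI.
have -> : [set u | phi u < p] :&: [set u | phi u == p] = set0.
  by apply/setP => u; rewrite !inE andbC; case: eqP => // ->; rewrite ltnn.
rewrite cards0 addn0; apply: subset_leq_card; apply/subsetP => u; rewrite !inE.
by case/orP => [/ltn_trans|/eqP ->] //; apply.
Qed.

Lemma compatible_block alpha v : compatible phi alpha ->
  lo phi (phi v) <= alpha v < lo phi (phi v) + ell phi (phi v).
Proof. by case/andP=> _ /forallP /(_ v). Qed.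

Lemma compatible_lt alpha a b :
  compatible phi alpha -> phi a < phi b -> alpha a < alpha b.
Proof.
move=> C ab; have /andP[_ h1] := compatible_block a C.
have /andP[h2 _] := compatible_block b C.
exact: leq_trans h1 (leq_trans (lo_ell_le ab) h2).
Qed.

Lemma compatible_ltE alpha a b : compatible phi alpha -> phi a != phi b ->
  (alpha a < alpha b) = (phi a < phi b).
Proof.
move=> C; case: (ltngtP (phi a) (phi b)) => [ab|ba|/val_inj ->]; last by rewrite eqxx.
- by rewrite compatible_lt.
- by rewrite ltnNge ltnW // compatible_lt.
Qed.

Lemma compatible_neq alpha a b : compatible phi alpha -> a != b ->
  nat_of_ord (alpha a) != alpha b.
Proof.
case/andP=> /injectiveP inj _ ab.
by apply: contra ab => /eqP /val_inj /inj ->.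
Qed.

(* Sorting V by (phi v, enum_rank v) gives a compatible bijection. *)
Definition phi_key (v : V) : nat := enum_rank v + #|V| * phi v.

Lemma phi_key_lt u v : phi u < phi v -> phi_key u < phi_key v.
Proof.
rewrite /phi_key; have := ltn_ord (enum_rank u); have := ltn_ord (enum_rank v).
move: (nat_of_ord (enum_rank u)) (nat_of_ord (enum_rank v)) => ru rv.
move: #|V| => N; nia.
Qed.

Lemma phi_key_inj : injective phi_key.
Proof.
move=> u v e; have /(congr1 (modn^~ #|V|)) := e.
rewrite /phi_key ![_ + _ * _]addnC ![#|V| * _]mulnC !modnMDl !modn_small //.
by move=> /val_inj; exact: enum_rank_inj.
Qed.

Definition key_rank (v : V) : nat := #|[set u | phi_key u < phi_key v]|.

Lemma key_rank_lt v : key_rank v < #|V|.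
Proof.
rewrite /key_rank -cardsT; apply: proper_card; apply/properP; split; first exact: subsetT.
by exists v; rewrite ?inE ?ltnn.
Qed.

Lemma key_rank_mono u v : phi_key u < phi_key v -> key_rank u < key_rank v.
Proof.
move=> uv; apply: proper_card; apply/properP; split.
  by apply/subsetP => w; rewrite !inE => /ltn_trans; apply.
by exists u; rewrite !inE ?ltnn.
Qed.

Definition sorted_bij : bij := [ffun v => Ordinal (key_rank_lt v)].

Lemma sorted_bij_compatible : compatible phi sorted_bij.
Proof.
apply/andP; split.
  apply/injectiveP => u v; rewrite !ffunE => /(congr1 val) /= e.
  apply: phi_key_inj; case: (ltngtP (phi_key u) (phi_key v)) => // /key_rank_mono;
  by rewrite e ltnn.
apply/forallP => v; rewrite ffunE /= -!card_phi_lt; apply/andP; split.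
  by apply: subset_leq_card; apply/subsetP => u; rewrite !inE; exact: phi_key_lt.
have sub : [set u | phi_key u < phi_key v] \subset
    [set u | phi u < phi v] :|: ([set u | phi u == phi v] :\ v).
  apply/subsetP => u; rewrite !inE => uv.
  have nuv : u != v by apply: contraTneq uv => ->; rewrite ltnn.
  case: (ltngtP (phi u) (phi v)) => [//|/phi_key_lt|/val_inj ->]; last by rewrite eqxx nuv orbT.
  by rewrite ltnNge ltnW.
apply: leq_ltn_trans (subset_leq_card sub) (leq_ltn_trans (leq_card_setU _ _).1 _).
by rewrite /ell [X in _ < _ + X](cardsD1 v) inE eqxx ltn_add2l.
Qed.

Definition ncompat (P : pred bij) : nat := \sum_(alpha | compatible phi alpha) P alpha.

Lemma card_compatible (P : pred bij) :
  #|[set alpha | compatible phi alpha && P alpha]| = ncompat P.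
Proof.
rewrite /ncompat -sum1_card (eq_bigl (fun alpha => compatible phi alpha && P alpha)).
  by rewrite big_mkcondr; apply: eq_bigr => alpha _; case: (P alpha).
by move=> alpha; rewrite inE.
Qed.

Lemma ncompat_gt0 : 0 < ncompat xpredT.
Proof. by rewrite /ncompat (bigD1 sorted_bij) ?sorted_bij_compatible. Qed.

Lemma eq_ncompat (P Q : pred bij) :
  {in compatible phi, P =1 Q} -> ncompat P = ncompat Q.
Proof. by move=> PQ; apply: eq_bigr => alpha /PQ ->. Qed.

Lemma ncompatD (P Q S : pred bij) :
  {in compatible phi, forall alpha, P alpha + Q alpha = S alpha} ->
  ncompat P + ncompat Q = ncompat S.
Proof. by move=> PQS; rewrite /ncompat -big_split; apply: eq_bigr => alpha /PQS. Qed.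

Lemma ncompat_const (b : bool) : ncompat (fun _ => b) = ncompat xpredT * b.
Proof. by case: b; rewrite ?muln1 ?muln0 // /ncompat big1. Qed.

Definition swap_bij (a b : V) (alpha : bij) : bij := [ffun v => alpha (tperm a b v)].

Lemma swap_bijK a b : involutive (swap_bij a b).
Proof. by move=> alpha; apply/ffunP => v; rewrite !ffunE tpermK. Qed.

Lemma swap_bij_compatible a b alpha : phi a = phi b ->
  compatible phi alpha -> compatible phi (swap_bij a b alpha).
Proof.
move=> ab /[dup] C /andP[/injectiveP inj _]; apply/andP; split.
  by apply/injectiveP => u v; rewrite !ffunE => /inj /perm_inj.
apply/forallP => v; rewrite ffunE.
have -> : phi v = phi (tperm a b v) by case: tpermP => [->|->|].
exact: compatible_block.
Qed.

Lemma ncompat_swap a b (P : pred bij) : phi a = phi b ->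
  ncompat P = ncompat (fun alpha => P (swap_bij a b alpha)).
Proof.
move=> ab; rewrite /ncompat (reindex_inj (inv_inj (swap_bijK a b))) /=.
apply: eq_bigl => alpha; apply/idP/idP; last exact: swap_bij_compatible.
by move/(swap_bij_compatible ab); rewrite swap_bijK.
Qed.

Lemma ncompat_lt_tied a b : a != b -> phi a = phi b ->
  (ncompat (fun alpha => alpha a < alpha b)).*2 = ncompat xpredT.
Proof.
move=> ab e; rewrite -addnn {2}(ncompat_swap _ e).
apply: ncompatD => alpha /compatible_neq /(_ ab).
by rewrite !ffunE tpermL tpermR; lia.
Qed.

Lemma satisfiesC (x y z : V) : satisfies (x, y, z) =1 satisfies (x, z, y).
Proof. by move=> alpha; rewrite /= orbC. Qed.

Lemma ncompat_satisfies_tied (x y z : V) : x != y -> phi x = phi y -> phi x != phi z ->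
  (ncompat (satisfies (x, y, z))).*2 = ncompat xpredT.
Proof.
move=> xy exy nxz; have nzx : phi z != phi x by rewrite eq_sym.
case: (ltngtP (phi x) (phi z)) => [lt_xz|lt_zx|/val_inj e]; last by rewrite e eqxx in nxz.
- rewrite -(@ncompat_lt_tied y x) 1?eq_sym //.
  congr _.*2; apply: eq_ncompat => alpha C /=.
  rewrite (compatible_ltE C nxz) (compatible_ltE C nzx) lt_xz.
  by rewrite (leq_gtF (ltnW lt_xz)) andbT orbF.
- rewrite -(ncompat_lt_tied xy exy); congr _.*2; apply: eq_ncompat => alpha C /=.
  rewrite (compatible_ltE C nxz) (compatible_ltE C nzx) lt_zx.
  by rewrite (leq_gtF (ltnW lt_zx)) andbF.
Qed.

Definition ncompat_chain (a b c : V) : nat :=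
  ncompat (fun alpha => (alpha a < alpha b) && (alpha b < alpha c)).

Lemma ncompat_chain_swapl a b c : a != c -> b != c -> phi a = phi b ->
  ncompat_chain a b c = ncompat_chain b a c.
Proof.
move=> ac bc e; rewrite /ncompat_chain (ncompat_swap _ e); apply: eq_ncompat => alpha _.
by rewrite /= !ffunE tpermL tpermR tpermD.
Qed.

Lemma ncompat_chain_swapr a b c : b != a -> c != a -> phi b = phi c ->
  ncompat_chain a b c = ncompat_chain a c b.
Proof.
move=> ba ca e; rewrite /ncompat_chain (ncompat_swap _ e); apply: eq_ncompat => alpha _.
by rewrite /= !ffunE tpermL tpermR tpermD.
Qed.

Lemma ncompat_satisfies_all_tied (x y z : V) : x != y -> x != z -> y != z ->
  phi x = phi y -> phi x = phi z -> ncompat (satisfies (x, y, z)) * 3 = ncompat xpredT.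
Proof.
move=> xy xz yz exy exz; have eyz : phi y = phi z by rewrite -exy.
have [yx zx zy] : [/\ y != x, z != x & z != y] by split; rewrite eq_sym.
set N := ncompat_chain x y z.
have e_yxz : ncompat_chain y x z = N := ncompat_chain_swapl yz xz (esym exy).
have e_xzy : ncompat_chain x z y = N := ncompat_chain_swapr zx yx (esym eyz).
have e_zxy : ncompat_chain z x y = N by rewrite (ncompat_chain_swapl zy xy (esym exz)).
have e_yzx : ncompat_chain y z x = N by rewrite (ncompat_chain_swapr zy xy (esym exz)).
have e_zyx : ncompat_chain z y x = N by rewrite (ncompat_chain_swapl zx yx (esym eyz)).
have -> : ncompat (satisfies (x, y, z)) = ncompat_chain y x z + ncompat_chain z x y.
  by apply/esym/ncompatD => alpha C /=; have := compatible_neq C xy; lia.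
have -> : ncompat xpredT = ncompat_chain x y z + ncompat_chain y x z + ncompat_chain x z y
    + ncompat_chain z x y + ncompat_chain y z x + ncompat_chain z y x.
  rewrite /ncompat_chain /ncompat -!big_split /=; apply: eq_bigr => alpha C.
  have := compatible_neq C xy; have := compatible_neq C xz; have := compatible_neq C yz.
  move: (nat_of_ord (alpha x)) (nat_of_ord (alpha y)) (nat_of_ord (alpha z)); lia.
rewrite e_yxz e_xzy e_zxy e_yzx e_zyx /N; lia.
Qed.

Lemma satisfies_untied (x y z : V) alpha : compatible phi alpha ->
  phi x != phi y -> phi x != phi z ->
  satisfies (x, y, z) alpha = (phi y < phi x < phi z) || (phi z < phi x < phi y).
Proof. by move=> C xy xz; rewrite /= !compatible_ltE // 1?eq_sym. Qed.

(* sat_num p q r / sat_den p q r is the probability that a random compatible bijection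
   satisfies (x, y, z) when (phi x, phi y, phi z) = (p, q, r). *)
Definition sat_den (p q r : 'I_4) : nat :=
  if p == q then (if p == r then 3 else 2) else if p == r then 2 else 1.

Definition sat_num (p q r : 'I_4) : nat :=
  if (p == q) || (p == r) then 1 else (q < p < r) || (r < p < q).

Lemma ncompat_satisfies (x y z : V) : x != y -> x != z -> y != z ->
  ncompat (satisfies (x, y, z)) * sat_den (phi x) (phi y) (phi z)
  = ncompat xpredT * sat_num (phi x) (phi y) (phi z).
Proof.
move=> xy xz yz; rewrite /sat_den /sat_num.
have [exy|nxy] := eqVneq (phi x) (phi y); have [exz|nxz] := eqVneq (phi x) (phi z) => /=.
- by rewrite muln1 ncompat_satisfies_all_tied.
- by rewrite muln1 muln2 ncompat_satisfies_tied.
- by rewrite muln1 muln2 (eq_ncompat (in1W (satisfiesC _ _ _))) ncompat_satisfies_tied // eq_sym.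
- by rewrite muln1 -ncompat_const; apply: eq_ncompat => alpha C; rewrite satisfies_untied.
Qed.

End CompatibleBijections.

Section SignPolynomials.
Variable R : realFieldType.
Local Open Scope ring_scope.

Lemma msizeM_bound n (p q : {mpoly R[n]}) a b :
  (msize p <= a.+1 -> msize q <= b.+1 -> msize (p * q) <= (a + b).+1)%N.
Proof.
have [->|p0] := eqVneq p 0; first by rewrite mul0r msize0.
have [->|q0] := eqVneq q 0; first by rewrite mulr0 msize0.
rewrite msizeM //; move: (msize p) (msize q) => x y; lia.
Qed.

Lemma meval_sum n (eps : 'I_n -> R) (I : Type) (r : seq I) (P : pred I)
    (F : I -> {mpoly R[n]}) :
  meval eps (\sum_(i <- r | P i) F i) = \sum_(i <- r | P i) meval eps (F i).
Proof. exact: raddf_sum. Qed.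

Definition sign_indicator n (i : 'I_n) (b : bool) : {mpoly R[n]} :=
  2^-1 *: (1 + pm1 R b *: 'X_i).

Lemma msize_sign_indicator n (i : 'I_n) b : (msize (sign_indicator i b) <= 2)%N.
Proof.
apply: leq_trans (msizeZ_le _ _) _; apply: leq_trans (msizeD_le _ _) _.
rewrite geq_max msize1; apply: leq_trans (msizeZ_le _ _) _.
by rewrite msizeX mdeg1.
Qed.

Lemma meval_sign_indicator n (i : 'I_n) b (eps : 'I_n -> R) c : eps i = pm1 R c ->
  meval eps (sign_indicator i b) = (b == c)%:R.
Proof.
move=> epsi; rewrite mevalZ mevalD meval1 mevalZ mevalXU epsi {epsi}.
have two0 : (2 : R) != 0 by rewrite pnatr_eq0.
by case: b; case: c; rewrite /pm1 /= ?mulr1 ?mulrN1 ?opprK ?subrr ?mulr0 // mulVf.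
Qed.

End SignPolynomials.

Section SignEncoding.
Variables (R : realFieldType) (V : finType).
Local Open Scope ring_scope.
Local Notation n := #|{: V * bool}|.

Definition digit (p : 'I_4) (e : bool) : bool := odd (p %/ 2 ^ e).

Lemma digit_eq (p q : 'I_4) :
  (digit p false == digit q false) && (digit p true == digit q true) = (p == q).
Proof. by case: p q => [[|[|[|[|?]]]] ?] [[|[|[|[|?]]]] ?]. Qed.

Definition signs (phi : {ffun V -> 'I_4}) : {ffun 'I_n -> bool} :=
  [ffun i => let: (v, e) := enum_val i in digit (phi v) e].

Lemma signs_enum_rank phi v e : signs phi (enum_rank (v, e)) = digit (phi v) e.
Proof. by rewrite ffunE enum_rankK. Qed.

Lemma signs_inj : injective signs.
Proof.
move=> phi psi e; apply/ffunP => v.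
by apply/eqP; rewrite -digit_eq -!signs_enum_rank e !eqxx.
Qed.

Lemma card_signs_fibre (s : {ffun 'I_n -> bool}) : #|[set phi | signs phi == s]| = 1%N.
Proof.
have card_eq : #|{ffun 'I_n -> bool}| = #|{ffun V -> 'I_4}|.
  by rewrite !card_ffun card_bool !card_ord card_prod card_bool mulnC expnM.
have /codomP [phi0 ->] := inj_card_onto signs_inj (eq_leq card_eq) s.
have -> : [set phi | signs phi == signs phi0] = [set phi0].
  by apply/setP => phi; rewrite !inE (inj_eq signs_inj).
exact: cards1.
Qed.

Definition value_indicator (v : V) (p : 'I_4) : {mpoly R[n]} :=
  sign_indicator R (enum_rank (v, false)) (digit p false)
  * sign_indicator R (enum_rank (v, true)) (digit p true).

Lemma msize_value_indicator v p : (msize (value_indicator v p) <= 3)%N.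
Proof. exact: msizeM_bound (msize_sign_indicator _ _ _) (msize_sign_indicator _ _ _). Qed.

Lemma meval_value_indicator phi v p :
  meval (fun i => pm1 R (signs phi i)) (value_indicator v p) = (p == phi v)%:R.
Proof.
by rewrite mevalM !(meval_sign_indicator _ (erefl _)) !signs_enum_rank -natrM mulnb digit_eq.
Qed.

Definition weight (p q r : 'I_4) : R := (sat_num p q r)%:R / (sat_den p q r)%:R - 3%:R^-1.

Definition constraint_poly (c : constraint V) : {mpoly R[n]} :=
  let: (x, y, z) := c in
  \sum_(p : 'I_4) \sum_(q : 'I_4) \sum_(r : 'I_4)
    weight p q r *: (value_indicator x p * value_indicator y q * value_indicator z r).

Lemma msize_constraint_poly c : (msize (constraint_poly c) <= 7)%N.
Proof.
case: c => [[x y] z]; do 3!(apply: leq_trans (msize_sum _ _ _) _; apply/bigmax_leqP => ? _).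
apply: leq_trans (msizeZ_le _ _) _.
apply: (msizeM_bound (a := 4)) (msize_value_indicator _ _).
exact: msizeM_bound (msize_value_indicator _ _) (msize_value_indicator _ _).
Qed.

Lemma meval_constraint_poly phi (x y z : V) :
  meval (fun i => pm1 R (signs phi i)) (constraint_poly (x, y, z))
  = weight (phi x) (phi y) (phi z).
Proof.
have term p q r : meval (fun i => pm1 R (signs phi i))
      (weight p q r *: (value_indicator x p * value_indicator y q * value_indicator z r))
    = weight p q r * [&& p == phi x, q == phi y & r == phi z]%:R.
  by rewrite mevalZ 2!mevalM !meval_value_indicator -!natrM !mulnb andbA.
rewrite /= meval_sum (big_only1 (phi x)) // => [|p /negbTE px _]; last first.
  by rewrite meval_sum big1 // => q _; rewrite meval_sum big1 // => r _; rewrite term px mulr0.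
rewrite meval_sum (big_only1 (phi y)) // => [|q /negbTE qy _]; last first.
  by rewrite meval_sum big1 // => r _; rewrite term qy andbF mulr0.
rewrite meval_sum (big_only1 (phi z)) // => [|r /negbTE rz _]; last first.
  by rewrite term rz !andbF mulr0.
by rewrite term !eqxx mulr1.
Qed.

Lemma wC_weight (x y z : V) phi : x != y -> x != z -> y != z ->
  wC R (x, y, z) phi = weight (phi x) (phi y) (phi z).
Proof.
move=> xy xz yz; rewrite /wC /weight; congr (_ - _).
have -> : #|[set alpha | compatible phi alpha]| = ncompat phi xpredT.
  by rewrite -card_compatible; apply: eq_card => alpha; rewrite !inE andbT.
have den0 : (0 < sat_den (phi x) (phi y) (phi z))%N by rewrite /sat_den; do !case: ifP.
apply/eqP; rewrite card_compatible eqr_div ?pnatr_eq0 -?lt0n ?ncompat_gt0 //.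
by rewrite -!natrM ncompat_satisfies // mulnC.
Qed.

End SignEncoding.

Local Open Scope ring_scope.
Unset Implicit Arguments.

Theorem lemma6 (R : realFieldType) (V : finType) (cs : seq (constraint V))
    (Hdist : all (@constraint_distinct V) cs) :
  exists (n : nat) (f : {ffun V -> 'I_4} -> {ffun 'I_n -> bool}) (P : {mpoly R[n]}),
    [/\ forall s : {ffun 'I_n -> bool}, (#|[set phi | f phi == s]| * 2 ^ n = 4 ^ #|V|)%N,
        (msize P <= 7)%N
      & forall phi : {ffun V -> 'I_4},
          wCs R cs phi = meval (fun i => pm1 R (f phi i)) P].
Proof.
exists #|{: V * bool}|, (@signs V), (\sum_(c <- cs) constraint_poly R c); split.
- by move=> s; rewrite card_signs_fibre mul1n card_prod card_bool mulnC expnM.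
- apply: leq_trans (msize_sum _ _ _) _; apply/bigmax_leqP_seq => c _ _.
  exact: msize_constraint_poly.
- move=> phi; rewrite /wCs meval_sum; apply: eq_big_seq => -[[x y] z].
  move=> /(allP Hdist) /and3P[xy xz yz].
  by rewrite wC_weight // meval_constraint_poly.
Qed.
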